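(* Let $s\ge 2$ and $R\ge 1$ be integers. The following are equivalent: (i) $\mathrm{Perf}(s,R,R)\neq\emptyset$; (ii) $\mathrm{Perf}(s,r,R)\neq\emptyset$ for some integer $r>R$; (iii) $\mathrm{Perf}(s,r,R)\neq\emptyset$ for every integer $r>R$.
   Context: $q$ is a prime power, $\mathbb F_q^{s\times n}$ the set of $s\times n$ matrices over $\mathbb F_q$ with rows in $\mathbb F_q^{1\times n}$. For a row $y=(y_1,\dots,y_n)$, the NRT weight is $w(y)=\max\{j: y_j\neq 0\}$ if $y\ne0$ and $w(0)=0$; for a matrix, $w(x)=\sum_i w(x_i)$. The NRT metric is $d(x,y)=w(x-y)$; $B(c,R)=\{x: d(x,c)\le R\}$. A code $C\subseteq\mathbb F_q^{s\times n}$ is $R$-perfect if the balls $B(c,R)$, $c\in C$, are pairwise disjoint and cover $\mathbb F_q^{s\times n}$; non-trivial means $|C|>1$ and $C\ne\mathbb F_q^{s\times n}$. $\mathrm{Perf}(s,n,R)$ denotes the set of non-trivial $R$-perfect codes in $\mathbb F_q^{s\times n}$ (for the fixed $q$). *)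

From HB Require Import structures.
From mathcomp Require Import all_boot all_order all_algebra.
Set Implicit Arguments. Unset Strict Implicit. Unset Printing Implicit Defensive.
Import GRing.Theory.
Local Open Scope ring_scope.

(* The alphabet is a finite field F = F_q (q = #|F| is then a prime power). *)
(* Coordinates j : 'I_n of a row are 0-indexed, so the paper's index j is j.+1. *)

Definition row_wt (F : finFieldType) (n : nat) (y : 'rV[F]_n) : nat :=
  (\max_(j < n | y ord0 j != 0%R) j.+1)%N.

Definition nrt_wt (F : finFieldType) (s n : nat) (x : 'M[F]_(s, n)) : nat :=
  (\sum_(i < s) row_wt (row i x))%N.

Definition nrt_dist (F : finFieldType) (s n : nat) (x y : 'M[F]_(s, n)) : nat :=
  nrt_wt (x - y).

Definition nrt_ball (F : finFieldType) (s n : nat) (c : 'M[F]_(s, n)) (R : nat)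
  : {set 'M[F]_(s, n)} := [set x | (nrt_dist x c <= R)%N].

Definition perfect_code (F : finFieldType) (s n R : nat) (C : {set 'M[F]_(s, n)}) :=
  (forall c c', c \in C -> c' \in C -> c != c' ->
     [disjoint nrt_ball c R & nrt_ball c' R]) /\
  (forall x : 'M[F]_(s, n), exists2 c, c \in C & x \in nrt_ball c R).

Definition nontrivial_code (F : finFieldType) (s n : nat) (C : {set 'M[F]_(s, n)}) :=
  (1 < #|C|)%N /\ C != [set: 'M[F]_(s, n)].

Definition Perf_nonempty (F : finFieldType) (s n R : nat) : Prop :=
  exists C : {set 'M[F]_(s, n)}, nontrivial_code C /\ perfect_code R C.

From mathcomp Require Import all_boot all_order all_algebra.
Set Implicit Arguments. Unset Strict Implicit. Unset Printing Implicit Defensive.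
Import GRing.Theory.
Local Open Scope ring_scope.

(* A matrix of NRT weight at most m vanishes in every column of index >= m.
   Hence, for R <= m <= n, the ball of radius R about c in F^(s x n) is the
   ball about the first m columns of c in F^(s x m), times the single tail of
   c.  So R-perfect codes in n columns restrict, along any fixed tail, to
   R-perfect codes in m columns, and R-perfect codes in m columns lift, with
   arbitrary tails, to R-perfect codes in n columns.  Nontriviality is
   automatic once s >= 2 and 1 <= R <= m: the all-ones matrix, of weight
   s * m > R, prevents a single codeword, and a weight-one matrix prevents the
   whole space. *)

Section NRTWeight.

Variable F : finFieldType.

Lemma row_wt_leP n (y : 'rV[F]_n) k :
  (row_wt y <= k)%N = [forall j : 'I_n, (y ord0 j != 0) ==> (j < k)%N].
Proof.
apply/bigmax_leqP/forallP => [le_yk j | lt_yk j nz_yj]; first exact/implyP/le_yk.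
exact: (implyP (lt_yk j)).
Qed.

Lemma row_wt_ge n (y : 'rV[F]_n) (j : 'I_n) : y ord0 j != 0 -> (j < row_wt y)%N.
Proof. exact: (@leq_bigmax_cond _ (fun j => y ord0 j != 0) (fun j : 'I_n => j.+1)). Qed.

Variable s : nat.

Lemma row_wt_le_nrt_wt n (x : 'M[F]_(s, n)) i : (row_wt (row i x) <= nrt_wt x)%N.
Proof. by rewrite /nrt_wt (bigD1 i) //= leq_addr. Qed.

Lemma nrt_wt0 n : nrt_wt (0 : 'M[F]_(s, n)) = 0%N.
Proof.
rewrite /nrt_wt big1 // => i _; apply/eqP; rewrite -leqn0 row_wt_leP.
by apply/forallP => j; rewrite !mxE eqxx.
Qed.

Lemma nrt_dist_xx n (x : 'M[F]_(s, n)) : nrt_dist x x = 0%N.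
Proof. by rewrite /nrt_dist subrr nrt_wt0. Qed.

Lemma nrt_wt_const1 n : nrt_wt (const_mx 1 : 'M[F]_(s, n)) = (s * n)%N.
Proof.
rewrite /nrt_wt (eq_bigr (fun=> n)) ?sum_nat_const ?card_ord // => i _.
rewrite row_const; apply/eqP; rewrite eqn_leq row_wt_leP.
apply/andP; split; first by apply/forallP => j; rewrite ltn_ord implybT.
case: n => // n; by apply: (row_wt_ge (j := ord_max)); rewrite mxE oner_eq0.
Qed.

Lemma nrt_wt_delta n (i : 'I_s) (j : 'I_n) : nrt_wt (delta_mx i j : 'M[F]_(s, n)) = j.+1.
Proof.
rewrite /nrt_wt (bigD1 i) //= big1 ?addn0 => [|i' ne_i'i].
  apply/eqP; rewrite eqn_leq row_wt_leP; apply/andP; split.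
    apply/forallP => k; rewrite !mxE eqxx /=.
    by case: (k =P j) => [->|_]; rewrite ?ltnSn ?implybT ?mulr0n ?eqxx.
  by apply: row_wt_ge; rewrite !mxE !eqxx oner_eq0.
apply/eqP; rewrite -leqn0 row_wt_leP; apply/forallP => k.
by rewrite !mxE (negbTE ne_i'i) eqxx.
Qed.

Lemma nrt_wt_le_tail0 n (y : 'M[F]_(s, n)) m i (j : 'I_n) :
  (nrt_wt y <= m)%N -> (m <= j)%N -> y i j = 0.
Proof.
move=> /(leq_trans (row_wt_le_nrt_wt y i)); rewrite row_wt_leP.
move=> /forallP/(_ j); rewrite mxE ltnNge => /implyP yP le_mj.
by apply/eqP/negPn/(contraL yP).
Qed.

End NRTWeight.

Section Perfect.

Variables (F : finFieldType) (s n R : nat).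
Implicit Type C : {set 'M[F]_(s, n)}.

Lemma perfect_code_eq C c c' :
  perfect_code R C -> c \in C -> c' \in C -> (nrt_dist c' c <= R)%N -> c' = c.
Proof.
case=> disjC _ Cc Cc' near_c'c; apply: contraTeq isT => ne_c'c.
have := disjointFr (disjC _ _ Cc' Cc ne_c'c) (x := c').
by rewrite !inE near_c'c nrt_dist_xx => ->.
Qed.

Lemma perfect_code_card_gt1 C :
  (2 <= s)%N -> (1 <= R <= n)%N -> perfect_code R C -> (1 < #|C|)%N.
Proof.
move=> s_ge2 /andP[R_gt0 le_Rn] [_ covC].
have [c Cc _] := covC 0.
have [c' Cc' near_c'] := covC (c + const_mx 1).
apply/card_gt1P; exists c, c'; split => //; apply: contraTneq near_c' => <-.
rewrite inE /nrt_dist addrAC subrr add0r nrt_wt_const1 -ltnNge.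
apply: leq_trans (leq_mul s_ge2 le_Rn).
by rewrite mul2n -addnn -addn1 leq_add2l.
Qed.

Lemma perfect_code_neq_setT C :
  (0 < s)%N -> (0 < R <= n)%N -> perfect_code R C -> C != setT.
Proof.
move=> s_gt0 /andP[R_gt0 le_Rn] perfC; apply/eqP => C_full.
pose i0 := Ordinal s_gt0; pose j0 := Ordinal (leq_trans R_gt0 le_Rn).
have inC x : x \in C by rewrite C_full inE.
have near_e0 : (nrt_dist (delta_mx i0 j0) (0 : 'M[F]_(s, n)) <= R)%N.
  by rewrite /nrt_dist subr0 nrt_wt_delta.
have /matrixP/(_ i0 j0)/eqP := perfect_code_eq perfC (inC _) (inC _) near_e0.
by rewrite !mxE !eqxx oner_eq0.
Qed.

Lemma Perf_nonemptyP :
  (2 <= s)%N -> (1 <= R <= n)%N ->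
  Perf_nonempty F s n R <-> exists C : {set 'M[F]_(s, n)}, perfect_code R C.
Proof.
move=> s_ge2 R_bounds; split => [[C [_ perfC]] | [C perfC]]; first by exists C.
exists C; do 2!split => //; first exact: perfect_code_card_gt1.
by apply: perfect_code_neq_setT perfC => //; apply: leq_trans s_ge2.
Qed.

End Perfect.

Section ColumnSplit.

Variables (F : finFieldType) (s m n : nat).
Hypothesis le_mn : (m <= n)%N.
Implicit Types (x y c t : 'M[F]_(s, n)) (h : 'M[F]_(s, m)).

Definition lcols x : 'M[F]_(s, m) := colsub (widen_ord le_mn) x.

Definition mxtail x : 'M[F]_(s, n) := \matrix_(i, j) if (m <= j)%N then x i j else 0.

Definition patch_lcols h t : 'M[F]_(s, n) :=
  \matrix_(i, j) if insub (val j) is Some k then h i k else t i j.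

Lemma lcolsB x y : lcols (x - y) = lcols x - lcols y.
Proof. by apply/matrixP => i j; rewrite !mxE. Qed.

Lemma mxtailB x y : mxtail (x - y) = mxtail x - mxtail y.
Proof. by apply/matrixP => i j; rewrite !mxE; case: ifP; rewrite ?subr0. Qed.

Lemma lcols_patch h t : lcols (patch_lcols h t) = h.
Proof.
apply/matrixP => i j; rewrite !mxE insubT //= => lt_jm.
by congr (h i _); apply: val_inj.
Qed.

Lemma mxtail_patch h t : mxtail (patch_lcols h t) = mxtail t.
Proof.
apply/matrixP => i j; rewrite !mxE; case: leqP => // le_mj.
by rewrite insubF // ltnNge le_mj.
Qed.

Lemma lcols_mxtail_inj x y : lcols x = lcols y -> mxtail x = mxtail y -> x = y.
Proof.
move=> /matrixP eq_l /matrixP eq_t; apply/matrixP => i j.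
have := eq_t i j; rewrite !mxE; case: leqP => // lt_jm _.
by have := eq_l i (Ordinal lt_jm); rewrite !mxE; congr (x i _ = y i _); apply: val_inj.
Qed.

Lemma mxtail_eq0 y : (nrt_wt y <= m)%N -> mxtail y = 0.
Proof.
move=> small_y; apply/matrixP => i j; rewrite !mxE; case: ifP => // le_mj.
exact: nrt_wt_le_tail0 small_y le_mj.
Qed.

Lemma nrt_wt_lcols y : mxtail y = 0 -> nrt_wt (lcols y) = nrt_wt y.
Proof.
move=> /matrixP tail0; apply: eq_bigr => i _; apply/eqP.
rewrite eqn_leq !row_wt_leP; apply/andP; split; apply/forallP => j; apply/implyP.
  by rewrite !mxE => nz_yij; apply: (row_wt_ge (j := widen_ord le_mn j)); rewrite mxE.
have := tail0 i j; rewrite !mxE.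
case: (leqP m j) => [_ -> | lt_jm _]; first by rewrite eqxx.
move=> nz_yij; apply: (row_wt_ge (j := Ordinal lt_jm)); rewrite !mxE.
by congr (y i _ != 0): nz_yij; apply: val_inj.
Qed.

Variable R : nat.
Hypothesis le_Rm : (R <= m)%N.

Lemma nrt_ball_split x c :
  (x \in nrt_ball c R) = (mxtail x == mxtail c) && (lcols x \in nrt_ball (lcols c) R).
Proof.
rewrite !inE /nrt_dist -lcolsB -subr_eq0 -mxtailB.
have [near_xc | far_xc] := boolP (nrt_wt (x - c) <= R)%N.
  have tail0 := mxtail_eq0 (leq_trans near_xc le_Rm).
  by rewrite tail0 eqxx nrt_wt_lcols // near_xc.
by apply/esym/negbTE; apply: contra far_xc => /andP[/eqP/nrt_wt_lcols <-].
Qed.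

Lemma patch_in_ball h t c :
  mxtail c = mxtail t -> (patch_lcols h t \in nrt_ball c R) = (h \in nrt_ball (lcols c) R).
Proof. by move=> eq_ct; rewrite nrt_ball_split mxtail_patch lcols_patch eq_ct eqxx. Qed.

Lemma perfect_code_lift (C0 : {set 'M[F]_(s, m)}) :
  perfect_code R C0 -> perfect_code R [set x | lcols x \in C0].
Proof.
case=> disjC0 covC0; split => [c c' | x].
  rewrite !inE => C0c C0c' ne_cc'; rewrite -setI_eq0; apply/set0Pn => -[x /setIP[]].
  rewrite !nrt_ball_split => /andP[/eqP tx_c near_c] /andP[/eqP tx_c' near_c'].
  have [eq_l | ne_l] := eqVneq (lcols c) (lcols c').
    by move: ne_cc'; rewrite (lcols_mxtail_inj eq_l (etrans (esym tx_c) tx_c')) eqxx.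
  by have := disjointFr (disjC0 _ _ C0c C0c' ne_l) near_c; rewrite near_c'.
have [h C0h near_h] := covC0 (lcols x).
exists (patch_lcols h x); first by rewrite inE lcols_patch.
by rewrite nrt_ball_split mxtail_patch eqxx lcols_patch.
Qed.

Lemma perfect_code_fiber (C : {set 'M[F]_(s, n)}) t :
  perfect_code R C -> perfect_code R (lcols @: [set c in C | mxtail c == mxtail t]).
Proof.
case=> disjC covC; split => [h h' | y].
  move=> /imsetP[c /setIdP[Cc /eqP tc] ->] /imsetP[c' /setIdP[Cc' /eqP tc'] ->] ne_l.
  have ne_cc' : c != c' by apply: contraNneq ne_l => ->.
  rewrite -setI_eq0; apply/set0Pn => -[y /setIP[near_c near_c']].
  rewrite -(patch_in_ball y tc) in near_c; rewrite -(patch_in_ball y tc') in near_c'.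
  by have := disjointFr (disjC _ _ Cc Cc' ne_cc') near_c; rewrite near_c'.
have [c Cc] := covC (patch_lcols y t).
rewrite nrt_ball_split mxtail_patch lcols_patch eq_sym => /andP[tc near_c].
by exists (lcols c) => //; apply: imset_f; rewrite inE Cc.
Qed.

End ColumnSplit.

Lemma exists_perfect_code_lcols (F : finFieldType) s m n R :
  (R <= m <= n)%N ->
  (exists C : {set 'M[F]_(s, n)}, perfect_code R C) <->
  (exists C : {set 'M[F]_(s, m)}, perfect_code R C).
Proof.
case/andP=> le_Rm le_mn; split => [[C perfC] | [C0 perfC0]].
  exists (lcols le_mn @: [set c in C | mxtail m c == mxtail m 0]).
  exact: perfect_code_fiber.
by exists [set x | lcols le_mn x \in C0]; apply: perfect_code_lift.
Qed.

Lemma Perf_nonempty_lcols (F : finFieldType) s n R :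
  (2 <= s)%N -> (1 <= R <= n)%N -> Perf_nonempty F s n R <-> Perf_nonempty F s R R.
Proof.
move=> s_ge2 /andP[R_gt0 le_Rn].
have R_le_n : (1 <= R <= n)%N by rewrite R_gt0.
have R_le_R : (1 <= R <= R)%N by rewrite R_gt0 leqnn.
apply: iff_trans (Perf_nonemptyP F s_ge2 R_le_n) _.
apply: iff_trans (iff_sym (Perf_nonemptyP F s_ge2 R_le_R)).
by apply: exists_perfect_code_lcols; rewrite leqnn.
Qed.

Theorem mainTheorem12 (F : finFieldType) (s R : nat) :
  (2 <= s)%N -> (1 <= R)%N ->
  (Perf_nonempty F s R R <-> exists r, (R < r)%N /\ Perf_nonempty F s r R) /\
  ((exists r, (R < r)%N /\ Perf_nonempty F s r R) <->
     forall r, (R < r)%N -> Perf_nonempty F s r R).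
Proof.
move=> s_ge2 R_gt0.
have PerfE r : (R < r)%N -> Perf_nonempty F s r R <-> Perf_nonempty F s R R.
  by move=> lt_Rr; apply: Perf_nonempty_lcols; rewrite // R_gt0 ltnW.
split; split.
- by move=> PR; exists R.+1; rewrite ltnSn; split => //; apply/PerfE.
- by case=> r [lt_Rr /(PerfE _ lt_Rr)].
- by case=> r [lt_Rr /(PerfE _ lt_Rr) PR] r' lt_Rr'; apply/PerfE.
- by move=> Pall; exists R.+1; split; rewrite ?ltnSn //; apply: Pall.
Qed.
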